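(* Let $(D,s,t,k)$ be a reduced instance of Rooted $k$-Distinct Branchings, let $(\hat T,\{B_x\})$ be the $s$-rooted cut decomposition of $D$, and let $\hat P=x_1\dots x_\ell$ be a degenerate path of $\hat T$ with $t\notin V(\hat P)$. Let $Y\subseteq V(\hat P)$ be the set of tails of arcs in $A^0$. If $(D,s,t,k)$ is not a positive instance, then $|Y|<k$.
   Context: Digraphs are finite and without loops; paths are directed. An out-tree (in-tree) is an oriented tree with exactly one vertex of in-degree zero (out-degree zero), its root; an out-branching (in-branching) of $D$ is a spanning out-tree (in-tree). An instance $(D,s,t,k)$ of Rooted $k$-Distinct Branchings ($D$ a digraph, $s,t\in V(D)$, $k$ an integer) is positive if $D$ has an out-branching $T^+$ rooted at $s$ and an in-branching $T^-$ rooted at $t$ with $|A(T^+)\setminus A(T^-)|\ge k$. It is reduced if $D$ has an out-branching rooted at $s$, an in-branching rooted at $t$, and every arc of $D$ lies in some out-branching rooted at $s$ or in some in-branching rooted at $t$. A vertex $v$ is bi-reachable from $r$ if there are two internally vertex-disjoint directed paths from $r$ to $v$. For a digraph $H$ with at least two vertices and $r\in V(H)$ such that every vertex of $H$ is reachable from $r$, the diblock $B_r$ of $r$ in $H$ is the set of all vertices bi-reachable from $r$, together with $r$ and all out-neighbours of $r$. For $x\in B_r\setminus\{r\}$ let $X_x$ be the set of vertices $v\notin B_r$ such that every directed $r$–$v$ path intersects $B_r$ for the last time in $x$; $x$ is a bottleneck of $B_r$ if $X_x\ne\emptyset$. The $r$-rooted cut decomposition $(\hat T,\{B_x\}_{x\in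 V(\hat T)})$ of $H$ is defined recursively: $\hat T$ is a rooted tree with root $r$; the set associated with the root is $B_r$; the children of $r$ are the bottlenecks of $B_r$; for each bottleneck $x$, the subtree rooted at $x$ with its sets is the $x$-rooted cut decomposition of $H[X_x\cup\{x\}]$. $B_x$ is degenerate if $x$ is an internal node of $\hat T$ and $|B_x|=2$. A path $x_1\dots x_\ell$ in $\hat T$ is degenerate if it is a subpath of a root-to-leaf path of $\hat T$ (with $x_{i+1}$ a child of $x_i$) and every $B_{x_i}$ is degenerate. For such a path $\hat P$, $A^0$ is the set of arcs $x_jx_i$ of $D$ with $j>i$. *)

From Stdlib Require Import ClassicalEpsilon.
From mathcomp Require Import all_boot.
Set Implicit Arguments. Unset Strict Implicit. Unset Printing Implicit Defensive.

Definition pbool (P : Prop) : bool :=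
  if excluded_middle_informative P then true else false.

Section Digraphs.
Variable V : finType.
Implicit Types (D T : {set V * V}) (S : {set V}).

Definition loopless D := forall v : V, (v, v) \notin D.

Definition ugraph T : rel V := fun x y => ((x, y) \in T) || ((y, x) \in T).
Definition indeg T v := #|[set u | (u, v) \in T]|.
Definition outdeg T v := #|[set w | (v, w) \in T]|.

(* T is (the arc set of) an oriented tree spanning all vertices of V:
   its underlying multigraph is connected with |V|-1 edges, i.e. a tree. *)
Definition spanning_oriented_tree T :=
  (forall x y : V, connect (ugraph T) x y) /\ #|T| = #|V|.-1.

Definition out_branching D s T :=
  [/\ T \subset D, spanning_oriented_tree T &
      forall v, (indeg T v == 0) = (v == s)].

Definition in_branching D t T :=
  [/\ T \subset D, spanning_oriented_tree T &
      forall v, (outdeg T v == 0) = (v == t)].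

Definition positive D s t (k : nat) :=
  exists T1 T2, [/\ out_branching D s T1, in_branching D t T2 &
                    k <= #|T1 :\: T2|].

Definition reduced D s t :=
  [/\ (exists T, out_branching D s T), (exists T, in_branching D t T) &
      forall a, a \in D ->
        (exists T, out_branching D s T /\ a \in T) \/
        (exists T, in_branching D t T /\ a \in T)].

(* directed path r = x0, x1 ... xm = v (p = [x1..xm]) in the induced
   subdigraph D[S] *)
Definition dpath D S r v (p : seq V) :=
  [&& path (fun x y => (x, y) \in D) r p, last r p == v, uniq (r :: p) &
      all (fun x => x \in S) (r :: p)].

Definition bireach D S r v :=
  exists p1 p2, [/\ dpath D S r v p1, dpath D S r v p2 &
                    forall x, x \in p1 -> x \in p2 -> x = v].

Definition diblock D S r : {set V} :=
  [set v in S | [|| v == r, (r, v) \in D | pbool (bireach D S r v)]].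

Definition Xset D S r x : {set V} :=
  [set v in S :\: diblock D S r |
     pbool ((exists p, dpath D S r v p) /\
            forall p, dpath D S r v p ->
              last r [seq y <- p | y \in diblock D S r] = x)].

Definition bottleneck D S r x :=
  [&& x \in diblock D S r, x != r & Xset D S r x != set0].

(* cd_node D s S x : x is a node of the s-rooted cut decomposition of D,
   and S is the vertex set of the subdigraph whose x-rooted cut decomposition
   is the subtree at x (so B_x = diblock D S x). *)
Inductive cd_node D (s : V) : {set V} -> V -> Prop :=
| cd_root : cd_node D s [set: V] s
| cd_child S x y : cd_node D s S x -> bottleneck D S x y ->
                   cd_node D s (Xset D S x y :|: [set y]) y.

Definition cd_childof D s x y :=
  exists S, cd_node D s S x /\ bottleneck D S x y.

(* B_x is degenerate: x is internal and |B_x| = 2 *)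
Definition degenerate_node D s x :=
  exists S, [/\ cd_node D s S x, (exists y, bottleneck D S x y) &
                #|diblock D S x| = 2].

Definition degenerate_path D s (xs : seq V) :=
  [/\ xs != [::],
      forall i, i < size xs -> degenerate_node D s (nth s xs i) &
      forall i, i.+1 < size xs -> cd_childof D s (nth s xs i) (nth s xs i.+1)].

Definition A0 D (xs : seq V) : {set V * V} :=
  [set a in D | [exists i : 'I_(size xs), exists j : 'I_(size xs),
     (i < j) && (a == (nth a.1 xs j, nth a.1 xs i))]].

Definition Yset D (xs : seq V) : {set V} := [set a.1 | a in A0 D xs].

End Digraphs.

(* Since x_(i+1) is a bottleneck of the diblock of x_i, every walk from s to x_(i+1) passes
   through x_i; hence x_i dominates x_j for i <= j. A backward arc x_j x_i of A^0 therefore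
   lies in no out-branching rooted at s, so by reducedness it lies in an in-branching rooted at
   t, whose path from x_i to t avoids x_j and, by dominance, every later x_j'. With these
   detours, t is reachable from every vertex in the subdigraph in which the vertices of Y may
   only leave along arcs of A^0, and a shortest-path in-tree of that subdigraph is an
   in-branching T^- using one arc of A^0 out of each vertex of Y. For any out-branching T^+
   these arcs lie in T^- \ T^+, and |T^+ \ T^-| = |T^- \ T^+| as both have |V| - 1 arcs. *)

From Stdlib Require Import ClassicalEpsilon.
From mathcomp Require Import all_boot.
Set Implicit Arguments. Unset Strict Implicit. Unset Printing Implicit Defensive.

Lemma pboolP (P : Prop) : reflect P (pbool P).
Proof. by rewrite /pbool; case: excluded_middle_informative => p; constructor. Qed.

Section RootedTree.
Variables (V : finType) (e : rel V) (r : V).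
Hypothesis e_conn : forall x y, connect (fun a b => e a b || e b a) x y.
Hypothesis e_card : #|[set a : V * V | e a.1 a.2]| = #|V|.-1.
Hypothesis e_indeg0 : forall v, (#|[set u | e u v]| == 0) = (v == r).

Lemma sum_indeg : \sum_v #|[set u | e u v]| = #|[set a : V * V | e a.1 a.2]|.
Proof.
have card_sum (T : finType) (P : pred T) : #|[set a | P a]| = \sum_a (P a : nat).
  by rewrite -sum1_card big_mkcond; apply: eq_bigr => a _; rewrite inE; case: (P a).
rewrite card_sum -(pair_big xpredT xpredT (fun u v => e u v : nat)) exchange_big.
by apply: eq_bigr => v _; rewrite (card_sum _ (fun u : V => e u v)).
Qed.

Lemma indeg_nonroot v : v != r -> #|[set u | e u v]| = 1.
Proof.
move=> vr.
have pos w : w != r -> 0 < #|[set u | e u w]| by rewrite lt0n e_indeg0.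
have sum_nonroot : \sum_(w | w != r) #|[set u | e u w]| = \sum_(w | w != r) 1.
  rewrite sum1_card cardC1 -e_card -sum_indeg [RHS](bigD1 r) //=.
  by move/eqP: (e_indeg0 r); rewrite eqxx => ->.
have : \sum_(w | w != r) (#|[set u | e u w]| - 1) == 0.
  rewrite -(eqn_add2r (\sum_(w | w != r) 1)) add0n -big_split /= -sum_nonroot.
  by apply/eqP/eq_bigr => w wr; rewrite subnK ?pos.
rewrite sum_nat_eq0 => /forall_inP /(_ v vr).
by move: (pos v vr); case: #|_| => // [[|n]].
Qed.

Lemma in_arc_uniq v x y : v != r -> e x v -> e y v -> x = y.
Proof.
move=> vr ex ey; have /eqP := indeg_nonroot vr.
by rewrite eqn_leq => /andP[/card_le1_eqP le1 _]; apply: le1; rewrite inE.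
Qed.

Lemma root_no_in_arc x : ~~ e x r.
Proof.
apply/negP => exr; move: (e_indeg0 r); rewrite eqxx cards_eq0 => /eqP/setP/(_ x).
by rewrite !inE exr.
Qed.

Lemma connect_root v : connect e r v.
Proof.
have back x y : e x y -> connect e r y -> connect e r x.
  move=> exy /connectP[p pp ly].
  have yr : y != r by apply: contraNneq (root_no_in_arc x) => <-.
  move: pp ly; case/lastP: p => [_ /= yr'|p z]; first by rewrite yr' eqxx in yr.
  rewrite rcons_path last_rcons => /andP[pp ez] yz; subst z.
  by rewrite (in_arc_uniq yr exy ez); apply/connectP; exists p.
have /connectP[p pp ->] := e_conn r v.
suff walk x q : connect e r x -> path (fun a b => e a b || e b a) x q ->
    connect e r (last x q) by apply: walk pp; apply: connect0.
elim: q x => //= a q IH x rx /andP[/orP[exa|eax] pa]; apply: IH pa.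
  exact: connect_trans rx (connect1 exa).
exact: back eax rx.
Qed.

End RootedTree.

Section Branchings.
Variable V : finType.
Implicit Types (D T : {set V * V}).

Lemma out_branching_props D s T : out_branching D s T ->
  [/\ T \subset D,
      (forall v x y, v != s -> (x, v) \in T -> (y, v) \in T -> x = y),
      (forall v, connect (fun a b => (a, b) \in T) s v) &
      (forall x, (x, s) \notin T)].
Proof.
case=> sub [conn card] deg.
have card' : #|[set a : V * V | (a.1, a.2) \in T]| = #|V|.-1.
  by rewrite -card; apply: eq_card => [[a b]]; rewrite inE.
split=> // [v x y vs|v|x].
- exact: (in_arc_uniq card' deg).
- exact: (connect_root conn card' deg).
- exact: (root_no_in_arc deg).
Qed.

Lemma in_branching_props D t T : in_branching D t T ->
  [/\ T \subset D,
      (forall v x y, v != t -> (v, x) \in T -> (v, y) \in T -> x = y) &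
      (forall v, connect (fun a b => (a, b) \in T) v t)].
Proof.
case=> sub [conn card] deg.
have card' : #|[set a : V * V | (a.2, a.1) \in T]| = #|V|.-1.
  rewrite -card -(@card_preimset _ (fun a : V * V => (a.2, a.1))).
    by apply: eq_card => [[a b]]; rewrite !inE.
  by move=> [a b] [c d] [-> ->].
have conn' x y : connect (fun a b => ((b, a) \in T) || ((a, b) \in T)) x y.
  by rewrite (eq_connect (e' := ugraph T)) // => a b; rewrite /ugraph orbC.
split=> // [v x y vt|v].
- exact: (in_arc_uniq card' deg).
- have := connect_root conn' card' deg v.
  by rewrite (connect_rev (fun a b => (a, b) \in T)).
Qed.

Lemma branching_cardsD T1 T2 : spanning_oriented_tree T1 -> spanning_oriented_tree T2 ->
  #|T1 :\: T2| = #|T2 :\: T1|.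
Proof. by case=> _ card1 [_ card2]; rewrite !cardsD setIC card1 card2. Qed.

Lemma in_branching_path_avoid D t T a b : in_branching D t T -> (b, a) \in T -> b != t ->
  exists w, [/\ path (fun x y => (x, y) \in D) a w, last a w = t & b \notin a :: w].
Proof.
move=> iT baT bt; have [sub out_uniq reach] := in_branching_props iT.
have /connectP[w0 pw0 lw0] := reach a.
move: lw0; case: (shortenP pw0) => w pw uw _ lw.
exists w; split=> //.
  by apply: sub_path pw => x y xy; apply: (subsetP sub).
apply/negP => bw; case/splitPl: bw pw uw lw => w1 [|z w2] lw1.
  by rewrite cats0 lw1 => _ _ bt'; rewrite bt' eqxx in bt.
rewrite cat_path lw1 /= => /and3P[_ /(out_uniq _ _ _ bt baT) <- _].
by rewrite /= mem_cat inE eqxx orbT.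
Qed.

Lemma connect_descent (e : rel V) t : (forall v, connect e v t) ->
  exists d : V -> nat, forall v, v != t -> exists2 w, e v w & d w < d v.
Proof.
move=> conn.
pose reaches v m := [exists p : m.-tuple V, path e v p && (last v p == t)].
have reachesP v p : path e v p -> last v p = t -> reaches v (size p).
  by move=> pp lp; apply/existsP; exists (in_tuple p); rewrite /= pp lp eqxx.
have ex v : exists m, reaches v m.
  by have /connectP[p pp lp] := conn v; exists (size p); apply: reachesP.
exists (fun v => ex_minn (ex v)) => v vt.
case: ex_minnP => m /existsP[[p sz] /andP[pvp /eqP lp]] _.
rewrite /= in pvp lp; rewrite -(eqP sz).
case: p {sz} pvp lp => [_ lp|w p /= /andP[vw pp] lp]; first by rewrite -lp eqxx in vt.
exists w => //.
by case: ex_minnP => m' _ /(_ _ (reachesP w p pp lp)).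
Qed.

Lemma in_branching_of_descent D (e : rel V) t (d : V -> nat) :
    (forall u w, e u w -> (u, w) \in D) ->
    (forall v, v != t -> exists2 w, e v w & d w < d v) ->
  exists T, in_branching D t T /\ forall u w, (u, w) \in T -> e u w.
Proof.
move=> eD desc.
have [f f_desc] : exists f : V -> V, forall v, v != t -> e v (f v) /\ d (f v) < d v.
  apply: (@fin_all_exists V (fun _ => V) (fun v w => v != t -> e v w /\ d w < d v)) => v.
  case: (eqVneq v t) => [->|vt]; first by exists t.
  by have [w ? ?] := desc v vt; exists w.
pose T := [set (v, f v) | v in [set~ t]].
have TP a b : ((a, b) \in T) = (a != t) && (b == f a).
  apply/imsetP/andP => [[v vt [-> ->]]|[ut /eqP ->]]; last by exists a; rewrite ?inE.
  by rewrite !inE in vt; rewrite vt.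
have Te u w : (u, w) \in T -> e u w by rewrite TP => /andP[ut /eqP ->]; case: (f_desc u ut).
exists T; split=> //; split.
- by apply/subsetP => -[u w] /Te /eD.
- have to_t m v : d v = m -> connect (ugraph T) v t.
    elim/ltn_ind: m v => m IH v dv.
    case: (eqVneq v t) => [->|vt]; first exact: connect0.
    have [_ dlt] := f_desc v vt.
    apply: connect_trans (connect1 _) (IH _ _ (f v) erefl); last by rewrite -dv.
    by rewrite /ugraph TP vt eqxx.
  split; last by rewrite card_imset ?cardsC1 // => a b [].
  move=> x y; apply: connect_trans (to_t _ x erefl) _.
  by rewrite (sym_connect_sym (fun a b => orbC _ _)) (to_t _ y erefl).
- move=> v; rewrite /outdeg cards_eq0; case: (eqVneq v t) => [->|vt].
    by apply/eqP/setP => w; rewrite !inE TP eqxx.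
  by apply/set0Pn; exists (f v); rewrite inE TP vt eqxx.
Qed.

Lemma in_branching_of_connect D (e : rel V) t :
    (forall u w, e u w -> (u, w) \in D) -> (forall v, connect e v t) ->
  exists T, in_branching D t T /\ forall u w, (u, w) \in T -> e u w.
Proof. by move=> eD /connect_descent[d]; apply: in_branching_of_descent. Qed.

End Branchings.

Lemma mem_prefix (T : eqType) (x u : T) p : u \in x :: p ->
  exists p1 p2, p = p1 ++ p2 /\ last x p1 = u.
Proof. by case/splitPl=> p1 p2 lp1; exists p1, p2. Qed.

Section Dominance.
Variables (V : finType) (D : {set V * V}) (s : V).
Local Notation E := (fun x y : V => (x, y) \in D).

Definition dominates a b := forall p, path E s p -> last s p = b -> a \in s :: p.

Lemma dominates_refl a : dominates a a.
Proof. by move=> p _ <-; apply: mem_last. Qed.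

Lemma dominates_trans a b c : dominates a b -> dominates b c -> dominates a c.
Proof.
move=> ab bc p pp lp; have /mem_prefix[q [r [epq lq]]] := bc p pp lp.
move: pp; rewrite epq cat_path => /andP[pq _].
by rewrite -cat_cons mem_cat (ab q pq lq).
Qed.

Lemma dominates_uniq_path a b p : dominates a b -> a != b ->
  path E s p -> uniq (s :: p) -> last s p = a -> b \notin s :: p.
Proof.
move=> ab neq pp up lp; apply/negP => /mem_prefix[q [[|z r] [epq lq]]].
  by rewrite -lp epq cats0 lq eqxx in neq.
move: pp up lp; rewrite epq cat_path -cat_cons cat_uniq last_cat lq.
move=> /andP[pq _] /and3P[_ /hasP dis _] lr; apply: dis; exists a.
  by rewrite -lr /= mem_last.
exact: ab q pq lq.
Qed.

Lemma dominates_antisym a b : connect E s a -> dominates a b -> dominates b a -> a = b.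
Proof.
move=> /connectP[p0 pp0 lp0] ab ba; apply/eqP/negPn/negP => neq.
move: lp0; case: (shortenP pp0) => p pp up _ /esym lp.
by have /negP := dominates_uniq_path ab neq pp up lp; apply; apply: ba.
Qed.

Lemma dominates_avoid a b q u w : dominates a b ->
  path E s q -> last s q = u -> a \notin s :: q ->
  path E u w -> a \notin u :: w -> b \notin u :: w.
Proof.
move=> ab pq lq aq pw aw; apply/negP => /mem_prefix[w1 [w2 [ew lw1]]].
have pqw : path E s (q ++ w1) by rewrite cat_path pq lq; move: pw; rewrite ew cat_path => /andP[].
have := ab _ pqw; rewrite last_cat lq lw1 -cat_cons mem_cat (negbTE aq) => /(_ erefl) /= aw1.
by rewrite ew inE mem_cat aw1 orbT in aw.
Qed.

Lemma dominated_arc_notin_out_branching T a b : dominates a b ->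
  out_branching D s T -> (b, a) \notin T.
Proof.
move=> ab oT; apply/negP => baT; have [sub in_uniq reach no_in] := out_branching_props oT.
case: (eqVneq a s) => [as_|asn]; first by rewrite as_ (negbTE (no_in _)) in baT.
have /connectP[p0 pp0 lp0] := reach a.
move: lp0; case: (shortenP pp0) => p pp up _ /esym.
case/lastP: p pp up => [_ _ /= ap|p z]; first by rewrite ap eqxx in asn.
rewrite rcons_path last_rcons -rcons_cons rcons_uniq => /andP[pp zaT] /andP[ap _] za.
subst z; move/negP: ap; apply; apply: ab (in_uniq _ _ _ asn zaT baT).
by apply: sub_path pp => x y xy; apply: (subsetP sub).
Qed.

End Dominance.

Lemma split_last_filter (T : Type) (a : pred T) x W :
  exists W1 W2, [/\ W = W1 ++ W2, last x W1 = last x (filter a W) & ~~ has a W2].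
Proof.
elim/last_ind: W => [|W z [W1 [W2 [-> l1 h2]]]]; first by exists [::], [::].
rewrite filter_rcons; case: ifP => az.
  by exists (rcons (W1 ++ W2) z), [::]; rewrite cats0 !last_rcons.
by exists W1, (rcons W2 z); rewrite rcons_cat has_rcons az.
Qed.

Section CutDecomposition.
Variables (V : finType) (D : {set V * V}).
Local Notation E := (fun x y : V => (x, y) \in D).
Local Notation inS S := (fun z : V => z \in S).

Lemma XsetP S x y v : v \in Xset D S x y ->
  [/\ v \in S, v \notin diblock D S x, (exists p, dpath D S x v p) &
      forall p, dpath D S x v p -> last x [seq z <- p | z \in diblock D S x] = y].
Proof. by rewrite !inE => /andP[/andP[-> ->] /pboolP[]]. Qed.

Lemma bottleneck_on_walk S x y v P W : bottleneck D S x y -> v \in Xset D S x y ->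
    path E x (P ++ W) -> last x (P ++ W) = v -> all (inS S) (x :: P ++ W) ->
    ~~ has (inS (diblock D S x)) W ->
  y \in P.
Proof.
case/and3P=> _ yx _ /XsetP[_ _ _ last_y] pPW + aPW /hasPn WnB.
case: (shortenP pPW) => r pr ur sr lr.
have /last_y : dpath D S x v r.
  rewrite /dpath pr lr eqxx ur /=; case/andP: aPW => -> /allP aPW.
  by apply/allP => z /sr /aPW.
move=> ly; have := mem_last x [seq z <- r | z \in diblock D S x].
rewrite ly inE (negbTE yx) mem_filter => /andP[yB /sr].
by rewrite mem_cat => /orP[// | /WnB]; rewrite yB.
Qed.

(* [Xset] is defined through simple paths; its defining property extends to walks. *)
Lemma Xset_walk_last S x y v W : bottleneck D S x y -> v \in Xset D S x y ->
    path E x W -> last x W = v -> all (inS S) (x :: W) ->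
  last x [seq z <- W | z \in diblock D S x] = y.
Proof.
move=> bn vX pW lW aW; have /and3P[_ yx _] := bn.
have [W1 [W2 [eW lW1 hW2]]] := split_last_filter (inS (diblock D S x)) x W.
move: lW1; set c := last x _ => lW1.
have on_path P : path E x P -> last x P = c -> all (inS S) (x :: P) -> y \in P.
  move=> pP lP aP; apply: (bottleneck_on_walk bn vX _ _ _ hW2).
  - by move: pW; rewrite eW !cat_path lW1 lP pP => /andP[].
  - by rewrite last_cat lP -lW1 -last_cat -eW.
  - by move: aW aP; rewrite eW /= !all_cat => /and3P[-> _ ->] /andP[_ ->].
have xS : x \in S by case/andP: aW.
have cB : c \in x :: [seq z <- W | z \in diblock D S x] by apply: mem_last.
case: (eqVneq c x) => [cx|cxn].
  by move: (on_path [::] isT (esym cx)); rewrite /= xS => /(_ isT).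
move: cB; rewrite inE (negbTE cxn) mem_filter !inE => /andP[/andP[cS]].
case/or3P=> [/eqP cx | xc | /pboolP[P1 [P2 [dP1 dP2 disj]]]]; first by rewrite cx eqxx in cxn.
  by move: (on_path [:: c]); rewrite /= xc xS cS inE => /(_ isT erefl isT) /eqP.
move: dP1 dP2 => /and4P[p1 /eqP l1 _ a1] /and4P[p2 /eqP l2 _ a2].
by rewrite (disj _ (on_path _ p1 l1 a1) (on_path _ p2 l2 a2)).
Qed.

Lemma Xset_walk_suffix S x y v W1 W2 : bottleneck D S x y -> v \in Xset D S x y ->
    path E x (W1 ++ W2) -> last x (W1 ++ W2) = v -> all (inS S) (x :: W1 ++ W2) ->
    ~~ has (inS (diblock D S x)) W2 ->
  all (inS (Xset D S x y)) W2.
Proof.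
move=> bn vX pW lW aW /hasPn W2nB; apply/allP => w wW2.
have wS : w \in S by apply: (allP aW); rewrite in_cons mem_cat wW2 !orbT.
rewrite /Xset in_set in_setD wS (W2nB _ wW2) /=; apply/pboolP.
case/splitPr: wW2 W2nB pW lW aW => u1 u2 W2nB.
rewrite -cat_rcons catA.
have : last x (W1 ++ rcons u1 w) = w by rewrite last_cat last_rcons.
move: (W1 ++ rcons u1 w) => w1 lw1.
rewrite cat_path last_cat lw1 -cat_cons all_cat => /andP[pw1 pu2] lu2 /andP[aw1 au2].
split=> [|r /and4P[pr /eqP lr ur ar]].
  move: lw1; case: (shortenP pw1) => r pr ur sr lr; exists r.
  rewrite /dpath pr lr eqxx ur /=; case/andP: aw1 => -> /allP aw1.
  by apply/allP => z /sr /aw1.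
have := @Xset_walk_last S x y v (r ++ u2) bn vX.
rewrite cat_path pr lr pu2 last_cat lr lu2 -cat_cons all_cat ar au2 => /(_ isT erefl isT).
rewrite filter_cat [filter _ u2](@eq_in_filter _ _ pred0) ?filter_pred0 ?cats0 // => z zu2.
by apply/negbTE/W2nB; rewrite mem_cat inE zu2 !orbT.
Qed.

Definition enters_via s (S : {set V}) x := forall p, path E s p -> last s p \in S ->
  exists p1 p2, [/\ p = p1 ++ p2, last s p1 = x & all (inS S) p2].

Lemma cd_node_entry s S x : cd_node D s S x -> enters_via s S x.
Proof.
elim=> [|S0 x0 y _ IH bn] p pp.
  by exists [::], p; split=> //; apply/allP => z; rewrite inE.
rewrite in_setU in_set1 => /orP[vX|/eqP ly]; last by exists p, [::]; rewrite cats0.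
have [vS _ [p0 /and4P[_ _ _ /andP[x0S _]]] _] := XsetP vX.
have [p1 [p2 [ep l1 a2]]] := IH p pp vS.
have pp2 : path E x0 p2 by move: pp; rewrite ep cat_path l1 => /andP[].
have lp2 : last x0 p2 = last s p by rewrite ep last_cat l1.
have ap2 : all (inS S0) (x0 :: p2) by rewrite /= x0S.
have [W1 [W2 [eW lW1 hW2]]] := split_last_filter (inS (diblock D S0 x0)) x0 p2.
exists (p1 ++ W1), W2; split.
- by rewrite ep eW catA.
- by rewrite last_cat l1 lW1 (Xset_walk_last bn vX pp2 lp2 ap2).
rewrite eW in pp2 lp2 ap2.
apply: sub_all (Xset_walk_suffix bn vX pp2 lp2 ap2 hW2) => z.
by rewrite in_setU => ->.
Qed.

Lemma cd_child_dominates s a b : cd_childof D s a b -> dominates D s a b.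
Proof.
case=> S [node /and3P[bB _ _]] p pp lp.
have bS : last s p \in S by move: bB; rewrite lp inE => /andP[].
have [p1 [p2 [-> l1 _]]] := cd_node_entry node pp bS.
by rewrite -l1 -cat_cons mem_cat mem_last.
Qed.

End CutDecomposition.

Section DegeneratePath.
Variables (V : finType) (D : {set V * V}) (s t : V) (xs : seq V).
Local Notation E := (fun x y : V => (x, y) \in D).
Local Notation n := (size xs).
Local Notation X i := (nth s xs i).

Definition avoids_from c (p : seq V) := forall j, c <= j -> j < n -> X j \notin p.

Definition forced_arcs : rel V :=
  fun u w => if u \in Yset D xs then (u, w) \in A0 D xs else (u, w) \in D.

Lemma forced_arcs_sub u w : forced_arcs u w -> (u, w) \in D.
Proof. by rewrite /forced_arcs; case: ifP => // _; rewrite inE => /andP[]. Qed.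

Lemma A0P a : a \in A0 D xs -> a \in D /\ exists i j, [/\ i < j, j < n & a = (X j, X i)].
Proof.
rewrite inE => /andP[aD /existsP[i /existsP[j /andP[ij /eqP ea]]]].
split=> //; exists i, j; split=> //.
by rewrite ea !(set_nth_default s a.1) ?ltn_ord.
Qed.

Hypothesis xs_chain : forall i, i.+1 < n -> cd_childof D s (X i) (X i.+1).
Hypothesis D_reduced : reduced D s t.
Hypothesis t_notin_xs : t \notin xs.

Lemma connect_source v : connect E s v.
Proof.
have [[T oT] _ _] := D_reduced; have [sub _ reach _] := out_branching_props oT.
by apply: connect_sub (reach v) => x y xy; apply/connect1/(subsetP sub).
Qed.

Lemma chain_dominates i j : i <= j -> j < n -> dominates D s (X i) (X j).
Proof.
elim: j => [|j IH]; first by rewrite leqn0 => /eqP-> _; apply: dominates_refl.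
rewrite leq_eqVlt => /orP[/eqP-> _|ij jn]; first exact: dominates_refl.
exact: dominates_trans (IH ij (ltnW jn)) (cd_child_dominates (xs_chain jn)).
Qed.

Lemma chain_neq i j : i < j -> j < n -> X i != X j.
Proof.
move=> ij jn; apply/eqP => Xij; have i1n : i.+1 < n := leq_ltn_trans ij jn.
have [S [_ /and3P[_ neq _]]] := xs_chain i1n.
have back : dominates D s (X i.+1) (X i) by rewrite Xij; apply: chain_dominates.
have := dominates_antisym (connect_source _) (chain_dominates (leqnSn i) i1n) back.
by move=> eq_i; rewrite eq_i eqxx in neq.
Qed.

Lemma chain_neq_target j : j < n -> X j != t.
Proof. by move=> jn; apply: contraNneq t_notin_xs => <-; apply: mem_nth. Qed.

Lemma chain_avoid i j p : i < j -> j < n -> path E (X i) p ->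
  X j \notin X i :: p -> avoids_from j (X i :: p).
Proof.
move=> ij jn pp nj j' jj' j'n.
have /connectP[q0 pq0 lq0] := connect_source (X i).
move: lq0; case: (shortenP pq0) => q pq uq _ /esym lq.
have nq := dominates_uniq_path (chain_dominates (ltnW ij) jn) (chain_neq ij jn) pq uq lq.
exact: dominates_avoid (chain_dominates jj' j'n) pq lq nq pp nj.
Qed.

Lemma backward_arc_reroute i j : i < j -> j < n -> (X j, X i) \in D ->
  exists w, [/\ path E (X i) w, last (X i) w = t & avoids_from j (X i :: w)].
Proof.
move=> ij jn arc; have [_ _ in_some] := D_reduced.
case: (in_some _ arc) => [[T [oT inT]]|[T [iT inT]]].
  have := dominated_arc_notin_out_branching (chain_dominates (ltnW ij) jn) oT.
  by rewrite inT.
have [w [pw lw nw]] := in_branching_path_avoid iT inT (chain_neq_target jn).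
by exists w; split=> //; apply: chain_avoid.
Qed.

(* Induction on [c]: at a vertex x_j of Y the walk is replaced by the backward arc to
   some x_i followed by a detour that avoids x_j, x_(j+1), ..., so that j < c. *)
Lemma forced_walk_connect c v w : path E v w -> last v w = t ->
  avoids_from c (v :: w) -> connect forced_arcs v t.
Proof.
elim/ltn_ind: c v w => c IHc.
have Ycase v w : v \in Yset D xs -> avoids_from c (v :: w) -> connect forced_arcs v t.
  move=> vY av; case/imsetP: (vY) => a aA0 va.
  have [aD [i [j [ij jn ea]]]] := A0P aA0; subst a; rewrite /= in va; subst v.
  have jc : j < c by rewrite ltnNge; apply/negP => cj; have := av j cj jn; rewrite mem_head.
  have [w' [pw' lw' aw']] := backward_arc_reroute ij jn aD.
  apply: connect_trans (connect1 _) (IHc j jc _ _ pw' lw' aw').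
  by rewrite /forced_arcs vY.
move=> v w; elim: w v => [|a w IHw] v pw lw av;
  case: (boolP (v \in Yset D xs)) => [vY|vnY]; try exact: Ycase vY av.
  by rewrite -lw; apply: connect0.
move: pw => /= /andP[va pw]; apply: connect_trans (connect1 _) (IHw _ pw lw _).
  by rewrite /forced_arcs (negbTE vnY).
by move=> j cj jn; have := av j cj jn; rewrite inE negb_or => /andP[].
Qed.

Lemma connect_forced v : connect forced_arcs v t.
Proof.
have [_ [T iT] _] := D_reduced; have [sub _ reach] := in_branching_props iT.
have /connectP[p pp lp] := reach v.
apply: (@forced_walk_connect n v p) => [|//|j nj jn]; last by rewrite leqNgt jn in nj.
by apply: sub_path pp => x y xy; apply: (subsetP sub).
Qed.

Lemma A0_notin_out_branching T a : out_branching D s T -> a \in A0 D xs -> a \notin T.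
Proof.
move=> oT /A0P[_ [i [j [ij jn ->]]]].
exact: dominated_arc_notin_out_branching (chain_dominates (ltnW ij) jn) oT.
Qed.

Lemma Yset_sub_tails T : in_branching D t T ->
    (forall u w, (u, w) \in T -> forced_arcs u w) ->
  Yset D xs \subset [set a.1 | a in T :&: A0 D xs].
Proof.
case=> _ _ outdeg0 Tforced; apply/subsetP => y yY.
have yt : y != t.
  by case/imsetP: yY => a /A0P[_ [i [j [_ jn ->]]]] ->; apply: chain_neq_target.
have /set0Pn[w yw] : [set w | (y, w) \in T] != set0 by rewrite -cards_eq0 outdeg0.
rewrite inE in yw; apply/imsetP; exists (y, w) => //.
by rewrite inE yw; have := Tforced _ _ yw; rewrite /forced_arcs yY.
Qed.

End DegeneratePath.

Theorem lemma17 (V : finType) (D : {set V * V}) (s t : V) (k : nat)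
    (xs : seq V) :
  loopless D -> reduced D s t -> degenerate_path D s xs -> t \notin xs ->
  ~ positive D s t k -> #|Yset D xs| < k.
Proof.
move=> _ red [_ _ chain] tn npos; rewrite ltnNge; apply/negP => kY; apply: npos.
have [[T0 oT0] _ _] := red.
have [Tm [iTm Tm_forced]] :=
  in_branching_of_connect (@forced_arcs_sub V D xs) (connect_forced chain red tn).
exists T0, Tm; split=> //.
have [_ T0tree _] := oT0; have [_ Tmtree _] := iTm.
rewrite (branching_cardsD T0tree Tmtree); apply: leq_trans kY _.
apply: leq_trans (subset_leq_card (Yset_sub_tails s tn iTm Tm_forced)) _.
apply: leq_trans (leq_imset_card _ _) _; apply: subset_leq_card.
apply/subsetP => a; rewrite in_setI in_setD => /andP[aTm aA0]; rewrite aTm andbT.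
exact: (A0_notin_out_branching chain oT0 aA0).
Qed.
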